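(* Let $X$ be a countable discrete metric space and $d\in D(X,X)$ such that the identity operator of $l^2(X)$ belongs to $M_d(X,X)$. Then $d$ and $d^0$ are almost isometric, i.e. there is $K\ge0$ with $|d(x_1,x_2')-d^0(x_1,x_2')|\le K$ for all $x_1,x_2\in X$.
   Context: $D(X,X)$ is the set of metrics on $X\sqcup X'$, where $X'=\{x':x\in X\}$ is a second copy of $X$, restricting to $d_X$ on each copy; an operator $T$ on $l^2(X)$ is viewed as a map from the first to the second copy, with entries $T_{x'_2x_1}=\langle T\delta_{x_1},\delta_{x_2}\rangle$. $T$ has propagation less than $L$ w.r.t. $d$ if its entry vanishes whenever $d(x_1,x_2')\ge L$; $M_d(X,X)$ is the norm closure of bounded finite-propagation operators. $d^0\in D(X,X)$ is the metric with $d^0(x_1,x_2')=d_X(x_1,x_2)+1$; note $M_{d^0}(X,X)=C^*_u(X)$. *)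

From Stdlib Require Import Reals List Classical ClassicalEpsilon.
Import ListNotations.
Open Scope R_scope.

Definition C := (R * R)%type.
Definition C0 : C := (0, 0).
Definition C1 : C := (1, 0).
Definition Cadd (z w : C) : C := (fst z + fst w, snd z + snd w).
Definition Csub (z w : C) : C := (fst z - fst w, snd z - snd w).
Definition Cmul (z w : C) : C :=
  (fst z * fst w - snd z * snd w, fst z * snd w + snd z * fst w).
Definition Cnorm2 (z : C) : R := fst z * fst z + snd z * snd z.

Definition is_metric {T : Type} (m : T -> T -> R) : Prop :=
  (forall a b, 0 <= m a b) /\
  (forall a b, m a b = 0 <-> a = b) /\
  (forall a b, m a b = m b a) /\
  (forall a b c, m a c <= m a b + m b c).

Definition discrete_metric {T : Type} (m : T -> T -> R) : Prop :=
  forall a, exists r, 0 < r /\ forall b, m a b < r -> b = a.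

Definition countable_type (T : Type) : Prop :=
  exists enc : T -> nat, forall a b, enc a = enc b -> a = b.

(* D(X,X): metrics on X ⊔ X' (modelled as X + X, inl = first copy,
   inr = second copy X') restricting to dX on each copy. *)
Definition in_D {X : Type} (dX : X -> X -> R) (d : X + X -> X + X -> R) : Prop :=
  is_metric d /\
  (forall a b, d (inl a) (inl b) = dX a b) /\
  (forall a b, d (inr a) (inr b) = dX a b).

Definition d0 {X : Type} (dX : X -> X -> R) (p q : X + X) : R :=
  match p, q with
  | inl a, inl b => dX a b
  | inr a, inr b => dX a b
  | inl a, inr b => dX a b + 1
  | inr a, inl b => dX b a + 1
  end.

(* Operators on l^2(X) are represented by their matrices:
   T y x = <T delta_x, delta_y> = T_{y' x}. *)
Definition matrix (X : Type) := X -> X -> C.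

Definition sumR {A : Type} (l : list A) (f : A -> R) : R :=
  fold_right (fun a s => f a + s) 0 l.
Definition sumC {A : Type} (l : list A) (f : A -> C) : C :=
  fold_right (fun a s => Cadd (f a) s) C0 l.

(* The matrix M defines a bounded operator on l^2(X) of norm <= c:
   for every finitely supported vector f (supported on the duplicate-free
   list xs) and every finite set ys of output coordinates,
   sum_{y in ys} |(M f)(y)|^2 <= c^2 ||f||^2.
   (Finitely supported vectors are dense, so this is exactly ||M|| <= c.) *)
Definition op_norm_le {X : Type} (M : matrix X) (c : R) : Prop :=
  0 <= c /\
  forall (xs ys : list X) (f : X -> C), NoDup xs -> NoDup ys ->
    sumR ys (fun y => Cnorm2 (sumC xs (fun x => Cmul (M y x) (f x))))
    <= c * c * sumR xs (fun x => Cnorm2 (f x)).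

Definition bounded_op {X : Type} (M : matrix X) : Prop :=
  exists c, op_norm_le M c.

Definition propagation_lt {X : Type} (d : X + X -> X + X -> R)
    (T : matrix X) (L : R) : Prop :=
  forall x1 x2, L <= d (inl x1) (inr x2) -> T x2 x1 = C0.

Definition finite_propagation {X : Type} (d : X + X -> X + X -> R)
    (T : matrix X) : Prop :=
  exists L, propagation_lt d T L.

Definition idm {X : Type} : matrix X :=
  fun y x => if excluded_middle_informative (y = x) then C1 else C0.

Definition msub {X : Type} (A B : matrix X) : matrix X :=
  fun y x => Csub (A y x) (B y x).

Definition in_Md {X : Type} (d : X + X -> X + X -> R) (A : matrix X) : Prop :=
  forall eps, 0 < eps ->
    exists T, bounded_op T /\ finite_propagation d T /\
      exists c, c < eps /\ op_norm_le (msub T A) c.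

From Pilot Require Import Defs.
From Stdlib Require Import Reals Lra List.
Import ListNotations.
Open Scope R_scope.

(* Approximate the identity within operator norm eps < 1 by a
   bounded operator T of propagation less than some L.  Every matrix entry
   of an operator is bounded in modulus by its norm, so each diagonal entry
   of T - I has modulus < 1; hence no diagonal entry T_{x'x} vanishes, and
   finite propagation forces d(x, x') < L for every x.  A uniform bound on
   the "diagonal" distances d(x, x') already makes any metric in D(X,X)
   almost isometric to d^0: by the triangle inequality through x1' or x2,
     dX(x1,x2) - d(x2,x2') <= d(x1,x2') <= dX(x1,x2) + d(x1,x1'). *)

(* A matrix entry is bounded by the operator norm: test the norm inequality
   on the unit vector delta_x and the single output coordinate y. *)
Lemma entry_le_op_norm {X : Type} (M : matrix X) (c : R) (x y : X) :
  op_norm_le M c -> Cnorm2 (M y x) <= c * c.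
Proof.
  intros [_ Hnorm].
  assert (Hsingle : NoDup [x] /\ NoDup [y]) by (split; repeat constructor; intros []).
  destruct Hsingle as [Hx Hy].
  pose proof (Hnorm [x] [y] (fun _ => Defs.C1) Hx Hy) as H.
  unfold sumR, sumC, Cnorm2, Cmul, Cadd, Defs.C1, C0 in H; simpl in H.
  unfold Cnorm2. destruct (M y x) as [a b]; simpl in *. nra.
Qed.

(* An operator within norm distance c < 1 of the identity has no vanishing
   diagonal entry: otherwise the corresponding entry of T - I would be -1. *)
Lemma near_identity_diag_nonzero {X : Type} (T : matrix X) (c : R) (x : X) :
  c < 1 -> op_norm_le (msub T (@idm X)) c -> T x x <> C0.
Proof.
  intros Hc1 Hnorm HTxx.
  pose proof (proj1 Hnorm) as Hc0.
  pose proof (entry_le_op_norm _ _ x x Hnorm) as Hentry.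
  unfold msub, idm in Hentry. rewrite HTxx in Hentry.
  destruct (ClassicalEpsilon.excluded_middle_informative (x = x)) as [_ | Hne];
    [| now elim Hne].
  unfold Cnorm2, Csub, C0, Defs.C1 in Hentry; simpl in Hentry. nra.
Qed.

(* If the identity lies in M_d(X,X), the diagonal distances d(x, x') are
   uniformly bounded: finite propagation of a close approximant T, together
   with T_{x'x} <> 0, forces d(x, x') below its propagation bound. *)
Lemma identity_in_Md_diag_bounded {X : Type} (d : X + X -> X + X -> R) :
  in_Md d (@idm X) -> exists L, forall x, d (inl x) (inr x) < L.
Proof.
  intros Hid.
  destruct (Hid 1 Rlt_0_1) as [T [_ [[L Hprop] [c [Hc1 Hnorm]]]]].
  exists L. intro x.
  destruct (Rlt_or_le (d (inl x) (inr x)) L) as [Hlt | Hge]; [exact Hlt |].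
  exfalso. exact (near_identity_diag_nonzero T c x Hc1 Hnorm (Hprop x x Hge)).
Qed.

Section DiagonalComparison.

Variables (X : Type) (dX : X -> X -> R) (d : X + X -> X + X -> R).
Hypothesis hd : in_D dX d.

(* Cross distances of a metric in D(X,X) differ from dX by at most the
   diagonal distances at the endpoints (triangle inequality via x1' or x2). *)
Lemma cross_dist_bounds (x1 x2 : X) :
  dX x1 x2 - d (inl x2) (inr x2) <= d (inl x1) (inr x2) <=
  dX x1 x2 + d (inl x1) (inr x1).
Proof.
  destruct hd as [[_ [_ [hsym htri]]] [hl hr]].
  pose proof (htri (inl x1) (inr x2) (inl x2)) as Hlower.
  pose proof (htri (inl x1) (inr x1) (inr x2)) as Hupper.
  rewrite hl, (hsym (inr x2) (inl x2)) in Hlower. rewrite hr in Hupper.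
  lra.
Qed.

(* A uniform bound L on the diagonal distances makes d almost isometric to
   d^0, with constant |L| + 1 (the extra 1 is the shift built into d^0). *)
Lemma diag_bounded_almost_isometric (L : R) :
  (forall x, d (inl x) (inr x) < L) ->
  forall x1 x2 : X,
    Rabs (d (inl x1) (inr x2) - d0 dX (inl x1) (inr x2)) <= Rabs L + 1.
Proof.
  intros Hdiag x1 x2. simpl.
  destruct hd as [[hpos _] _].
  pose proof (cross_dist_bounds x1 x2) as [Hlower Hupper].
  pose proof (Hdiag x1). pose proof (Hdiag x2).
  pose proof (hpos (inl x2) (inr x2)). pose proof (Rle_abs L).
  apply Rabs_le. lra.
Qed.

End DiagonalComparison.

Theorem lemma4p1 (X : Type) (dX : X -> X -> R)
  (hmet : is_metric dX) (hdisc : discrete_metric dX) (hcount : countable_type X)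
  (d : X + X -> X + X -> R) (hd : in_D dX d) (hid : in_Md d (@idm X)) :
  exists K, 0 <= K /\
    forall x1 x2 : X, Rabs (d (inl x1) (inr x2) - d0 dX (inl x1) (inr x2)) <= K.
Proof.
  destruct (identity_in_Md_diag_bounded d hid) as [L Hdiag].
  exists (Rabs L + 1). split.
  - pose proof (Rabs_pos L). lra.
  - exact (diag_bounded_almost_isometric X dX d hd L Hdiag).
Qed.
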